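(* Let $0<\varepsilon\le 0.1$, let $\Box$ be a closed axis-parallel square of side length $\varepsilon$ with center $o$, let $R\subseteq\Box$ be a nonempty circular domain, let $\Lambda\ge 10$ be an integer, and let $\gamma_1,\dots,\gamma_\Lambda$ be a $\Lambda$-decomposition of $\partial(R\oplus D)$ with division points $p_1,\dots,p_\Lambda$. Set $\varepsilon'=7(\tfrac1\Lambda+\varepsilon)$. Then for every $i\in[\Lambda]$, $\gamma_i$ is $\vec v$-monotone for every $\vec v\in\mathbb{S}^1$ with $\varepsilon'\le\mathsf{ang}(\overrightarrow{op_i},\vec v)\le\pi-\varepsilon'$ or $\pi+\varepsilon'\le\mathsf{ang}(\overrightarrow{op_i},\vec v)\le2\pi-\varepsilon'$.
   Context: A circular arc is a connected portion of a circle (segments included); a circular domain is a closed subset of $\mathbb{R}^2$ whose boundary consists of finitely many circular arcs intersecting only at endpoints. $D$ is the closed unit disk at the origin, $\oplus$ is Minkowski sum. Every ray from $o$ meets $\partial(R\oplus D)$ in exactly one point. For nonzero vectors $\vec u,\vec v$, $\mathsf{ang}(\vec u,\vec v)\in[0,2\pi)$ is the clockwise ordered angle from $\vec u$ to $\vec v$. A $\Lambda$-decomposition of $\partial(R\oplus D)$: shoot $\Lambda$ rays from $o$ dividing the full angle around $o$ into $\Lambda$ angles of size $2\pi/\Lambda$; they meet $\partial(R\oplus D)$ at points $p_1,\dots,p_\Lambda$ with $\mathsf{ang}(\overrightarrow{op_{i-1}},\overrightarrow{op_i})=2\pi/\Lambda$ (indices mod $\Lambda$, $p_0=p_\Lambda$);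 $\gamma_i$ is the portion of $\partial(R\oplus D)$ between $p_{i-1}$ and $p_i$ (the one containing no other $p_j$). A curve $\gamma$ is $\vec v$-monotone if there is a homeomorphism $f:[0,1]\to\gamma$ with $\langle\vec v,f(a)\rangle<\langle\vec v,f(b)\rangle$ whenever $a<b$. *)

From Stdlib Require Import Reals Lra List.
Open Scope R_scope.

Definition pt : Type := (R * R)%type.
Definition padd (u v : pt) : pt := (fst u + fst v, snd u + snd v).
Definition psub (u v : pt) : pt := (fst u - fst v, snd u - snd v).
Definition pscale (k : R) (u : pt) : pt := (k * fst u, k * snd u).
Definition dot (u v : pt) : R := fst u * fst v + snd u * snd v.
Definition norm (u : pt) : R := sqrt (dot u u).
Definition dist (u v : pt) : R := norm (psub u v).

Definition interior (S : pt -> Prop) (x : pt) : Prop :=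
  exists e, 0 < e /\ forall y, dist x y < e -> S y.
Definition closure (S : pt -> Prop) (x : pt) : Prop :=
  forall e, 0 < e -> exists y, S y /\ dist x y < e.
Definition boundary (S : pt -> Prop) (x : pt) : Prop :=
  closure S x /\ ~ interior S x.
Definition is_closed (S : pt -> Prop) : Prop := forall x, closure S x -> S x.

(* A circle arc is given by center c,
   radius r > 0 and parameter interval [t0, t1] with 0 < t1 - t0 <= 2 PI;
   t1 - t0 = 2 PI is the full circle, which has no endpoints. *)
Inductive circ_arc : Type :=
  | Seg (a b : pt)
  | CArc (c : pt) (r t0 t1 : R).

Definition circ_pt (c : pt) (r t : R) : pt := (fst c + r * cos t, snd c + r * sin t).

Definition arc_wf (A : circ_arc) : Prop :=
  match A with
  | Seg a b => a <> b
  | CArc c r t0 t1 => 0 < r /\ t0 < t1 /\ t1 - t0 <= 2 * PI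
  end.

Definition arc_pts (A : circ_arc) (x : pt) : Prop :=
  match A with
  | Seg a b => exists t, 0 <= t <= 1 /\ x = padd a (pscale t (psub b a))
  | CArc c r t0 t1 => exists t, t0 <= t <= t1 /\ x = circ_pt c r t
  end.

Definition arc_endpt (A : circ_arc) (x : pt) : Prop :=
  match A with
  | Seg a b => x = a \/ x = b
  | CArc c r t0 t1 => t1 - t0 < 2 * PI /\ (x = circ_pt c r t0 \/ x = circ_pt c r t1)
  end.

Definition circular_domain (S : pt -> Prop) : Prop :=
  is_closed S /\
  exists l : list circ_arc,
    Forall arc_wf l /\
    (forall x, boundary S x <-> exists A, In A l /\ arc_pts A x) /\
    (forall i j x, (i < j)%nat -> (j < length l)%nat ->
       arc_pts (nth i l (Seg (0,0) (0,0))) x ->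
       arc_pts (nth j l (Seg (0,0) (0,0))) x ->
       arc_endpt (nth i l (Seg (0,0) (0,0))) x /\
       arc_endpt (nth j l (Seg (0,0) (0,0))) x).

Definition square (o : pt) (eps : R) (x : pt) : Prop :=
  Rabs (fst x - fst o) <= eps / 2 /\ Rabs (snd x - snd o) <= eps / 2.

Definition minkD (S : pt -> Prop) (x : pt) : Prop :=
  exists r d, S r /\ norm d <= 1 /\ x = padd r d.

Definition rotcw (th : R) (u : pt) : pt :=
  (fst u * cos th + snd u * sin th, - fst u * sin th + snd u * cos th).

(* is_cw_ang u v th : th = ang(u, v), the clockwise angle in [0, 2 PI) from u to v
   (u, v nonzero). *)
Definition is_cw_ang (u v : pt) (th : R) : Prop :=
  0 <= th < 2 * PI /\ exists k, 0 < k /\ v = pscale k (rotcw th u).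

Definition cont01 (f : R -> pt) : Prop :=
  forall a, 0 <= a <= 1 -> forall e, 0 < e ->
    exists d, 0 < d /\ forall b, 0 <= b <= 1 -> Rabs (b - a) < d -> dist (f a) (f b) < e.

Definition homeo01 (f : R -> pt) (g : pt -> Prop) : Prop :=
  (forall a, 0 <= a <= 1 -> g (f a)) /\
  (forall x, g x -> exists a, 0 <= a <= 1 /\ f a = x) /\
  (forall a b, 0 <= a <= 1 -> 0 <= b <= 1 -> f a = f b -> a = b) /\
  cont01 f /\
  (forall a, 0 <= a <= 1 -> forall e, 0 < e ->
    exists d, 0 < d /\ forall b, 0 <= b <= 1 -> dist (f a) (f b) < d -> Rabs (b - a) < e).

Definition v_monotone (v : pt) (g : pt -> Prop) : Prop :=
  exists f, homeo01 f g /\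
    forall a b, 0 <= a -> a < b -> b <= 1 -> dot v (f a) < dot v (f b).

(* g is the portion of the curve bd between p (i-1) and p i containing no other
   division point p j (j in 1..Lam, indices mod Lam with p 0 = p Lam). *)
Definition is_portion (bd : pt -> Prop) (p : nat -> pt) (Lam i : nat) (g : pt -> Prop) : Prop :=
  (forall x, g x -> bd x) /\
  (exists f, homeo01 f g /\ f 0 = p (i - 1)%nat /\ f 1 = p i) /\
  (forall j, (1 <= j <= Lam)%nat -> g (p j) ->
     j = i \/ j = (i - 1)%nat \/ (i = 1%nat /\ j = Lam)).

From Pilot Require Import Defs.
From Stdlib Require Import Reals Lra List Lia Classical.
Open Scope R_scope.

(* Since [S] lies within [eps] of [o], the set [S ⊕ D] is nearly a unit disk: its
   non-interior points are at distance at least [1 - eps] from [o], and a chord [xy]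
   of its boundary always satisfies [<y - x, x - o> < eps |y - x|], for otherwise [x]
   would be an interior point.  Hence every ray from [o] meets the boundary once, and
   by continuity [gamma_i] cannot leave the sector between [op_(i-1)] and [op_i]
   without crossing the ray through [p_(i-2)] or [p_i].  For [v] at angle at least
   [eps'] from [op_i], the unit normal [n] of [v] then satisfies
   [<n, z - o> >= sin (7 eps) (1 - eps) >= eps] along [gamma_i], so by the chord
   estimate no chord of [gamma_i] is parallel to [n]: [<v, .>] is injective along
   [gamma_i], hence strictly monotone by the intermediate value theorem. *)

Lemma PI_lt_7_2 : PI < 7 / 2.
Proof.
  destruct (PI_ineq 1) as [_ H]. unfold tg_alt, PI_tg in H. simpl in H. lra.
Qed.

Lemma sin_7x_lower_bound x :
  0 < x <= 1 / 10 -> 0 < sin (7 * x) /\ x <= sin (7 * x) * (1 - x).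
Proof.
  intros Hx.
  assert (Hb := PI2_3_2).
  destruct (sin_bound (7 * x) 0) as [Hs _]; [lra|lra|].
  unfold sin_approx, sin_term in Hs. simpl in Hs.
  assert (Hsin : 7 * x - (7 * x) ^ 3 / 6 <= sin (7 * x)) by lra.
  assert (x * x <= 1 / 100) by nra.
  split; nra.
Qed.

Lemma sin_window a phi th :
  0 < a -> 0 <= phi -> a <= th -> th + phi <= PI - a ->
  sin a <= sin th /\ sin a <= sin (th + phi).
Proof.
  intros Ha Hphi Hth1 Hth2.
  assert (Hge : forall y, a <= y <= PI - a -> sin a <= sin y).
  { intros y Hy. destruct (Rle_dec y (PI / 2)).
    - apply sin_incr_1; lra.
    - rewrite <- (sin_PI_x y). apply sin_incr_1; lra. }
  split; apply Hge; lra.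
Qed.

Lemma pt_eq (a b : pt) : fst a = fst b -> snd a = snd b -> a = b.
Proof. destruct a, b; simpl; intros; subst; reflexivity. Qed.

Lemma dot_self_nonneg u : 0 <= dot u u.
Proof. unfold dot; nra. Qed.

Lemma norm_nonneg u : 0 <= norm u.
Proof. apply sqrt_pos. Qed.

Lemma norm_mul_self u : norm u * norm u = dot u u.
Proof. apply sqrt_sqrt, dot_self_nonneg. Qed.

Lemma norm_le_of_dot u c : 0 <= c -> dot u u <= c * c -> norm u <= c.
Proof.
  intros Hc H. assert (Hn := norm_nonneg u). assert (Hs := norm_mul_self u). nra.
Qed.

Lemma norm_lt_of_dot u c : 0 <= c -> dot u u < c * c -> norm u < c.
Proof.
  intros Hc H. assert (Hn := norm_nonneg u). assert (Hs := norm_mul_self u). nra.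
Qed.

Lemma norm_scale k u : norm (pscale k u) = Rabs k * norm u.
Proof.
  unfold norm, dot, pscale; simpl.
  rewrite <- sqrt_Rsqr_abs, <- sqrt_mult_alt by apply Rle_0_sqr.
  f_equal; unfold Rsqr; ring.
Qed.

Lemma norm_opp u : norm (pscale (-1) u) = norm u.
Proof. rewrite norm_scale, Rabs_left by lra. ring. Qed.

Lemma norm_psub_sym u w : norm (psub u w) = norm (psub w u).
Proof. unfold norm, dot, psub; simpl; f_equal; ring. Qed.

Definition perp (u : pt) : pt := (- snd u, fst u).

(* [cw u w > 0] iff [w] is obtained from [u] by a clockwise rotation of angle in
   (0, PI), cf. [cw_scale_rotcw]. *)
Definition cw (u w : pt) : R := snd u * fst w - fst u * snd w.

Lemma lagrange_identity u w : dot u w * dot u w + cw u w * cw u w = dot u u * dot w w.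
Proof. unfold dot, cw; ring. Qed.

Lemma abs_le_norm_mul x u w : x * x <= dot u u * dot w w -> Rabs x <= norm u * norm w.
Proof.
  intros H. apply Rsqr_incr_0_var.
  - rewrite <- Rsqr_abs. unfold Rsqr.
    replace (norm u * norm w * (norm u * norm w)) with (norm u * norm u * (norm w * norm w))
      by ring.
    rewrite !norm_mul_self. exact H.
  - apply Rmult_le_pos; apply norm_nonneg.
Qed.

Lemma abs_dot_le u w : Rabs (dot u w) <= norm u * norm w.
Proof.
  apply abs_le_norm_mul. rewrite <- lagrange_identity. assert (H := Rle_0_sqr (cw u w)).
  unfold Rsqr in H. lra.
Qed.

Lemma abs_cw_le u w : Rabs (cw u w) <= norm u * norm w.
Proof.
  apply abs_le_norm_mul. rewrite <- lagrange_identity. assert (H := Rle_0_sqr (dot u w)).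
  unfold Rsqr in H. lra.
Qed.

Lemma norm_triangle u w : norm (padd u w) <= norm u + norm w.
Proof.
  apply norm_le_of_dot; [apply Rplus_le_le_0_compat; apply norm_nonneg|].
  assert (H := Rle_abs (dot u w)). assert (Hd := abs_dot_le u w).
  assert (Hu := norm_mul_self u). assert (Hw := norm_mul_self w).
  replace (dot (padd u w) (padd u w)) with (dot u u + 2 * dot u w + dot w w)
    by (unfold dot, padd; simpl; ring).
  nra.
Qed.

Lemma norm_perp u : norm (perp u) = norm u.
Proof. unfold norm, dot, perp; simpl; f_equal; ring. Qed.

Lemma norm_rotcw th u : norm (rotcw th u) = norm u.
Proof.
  unfold norm, dot, rotcw; simpl; f_equal.
  assert (H := sin2_cos2 th). unfold Rsqr in H. nra.
Qed.

Lemma cw_self u : cw u u = 0.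
Proof. unfold cw; ring. Qed.

Lemma cw_perp_l v w : cw (perp v) w = dot v w.
Proof. unfold cw, perp, dot; simpl; ring. Qed.

Lemma cw_decomp B C Z :
  pscale (cw B C) Z = padd (pscale (cw Z C) B) (pscale (cw B Z) C).
Proof. unfold pscale, padd, cw; apply pt_eq; simpl; ring. Qed.

Lemma cw_scale_rotcw c th u : cw u (pscale c (rotcw th u)) = c * dot u u * sin th.
Proof. unfold cw, pscale, rotcw, dot; simpl; ring. Qed.

Lemma pscale_pscale a b u : pscale a (pscale b u) = pscale (a * b) u.
Proof. unfold pscale; apply pt_eq; simpl; ring. Qed.

Lemma rotcw_scale th c u : rotcw th (pscale c u) = pscale c (rotcw th u).
Proof. unfold rotcw, pscale; apply pt_eq; simpl; ring. Qed.

Lemma rotcw_rotcw a b u : rotcw a (rotcw b u) = rotcw (a + b) u.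
Proof. unfold rotcw; rewrite cos_plus, sin_plus; apply pt_eq; simpl; ring. Qed.

Lemma rotcw_sub_PI th u : rotcw (th - PI) u = pscale (-1) (rotcw th u).
Proof.
  unfold rotcw, pscale; rewrite cos_minus, sin_minus, cos_PI, sin_PI.
  apply pt_eq; simpl; ring.
Qed.

Lemma dot_perp_rotcw k th w :
  0 < k -> norm (pscale k (rotcw th w)) = 1 ->
  dot (perp (pscale k (rotcw th w))) w = norm w * sin th.
Proof.
  intros Hk Hv. rewrite norm_scale, norm_rotcw, Rabs_right in Hv by lra.
  replace (dot (perp (pscale k (rotcw th w))) w) with (k * dot w w * sin th)
    by (unfold dot, perp, pscale, rotcw; simpl; ring).
  rewrite <- norm_mul_self. replace (norm w * sin th) with ((k * norm w) * norm w * sin th)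
    by (rewrite Hv; ring).
  ring.
Qed.

Lemma parallel_of_cw_zero n w : dot n n = 1 -> cw n w = 0 -> w = pscale (dot n w) n.
Proof.
  unfold dot, cw, pscale; intros Hn Hw. destruct n as [n1 n2], w as [w1 w2]; simpl in *.
  apply pt_eq; simpl.
  - transitivity (w1 * (n1 * n1 + n2 * n2) - n2 * (n2 * w1 - n1 * w2)); [rewrite Hn, Hw; ring|ring].
  - transitivity (w2 * (n1 * n1 + n2 * n2) + n1 * (n2 * w1 - n1 * w2)); [rewrite Hn, Hw; ring|ring].
Qed.

Lemma sector_projection_lower_bound U U' Z n s :
  0 < cw U U' -> 0 <= cw U Z -> 0 <= cw Z U' -> 0 <= s ->
  s * norm U <= dot n U -> s * norm U' <= dot n U' -> s * norm Z <= dot n Z.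
Proof.
  intros HUU' HUZ HZU' Hs HnU HnU'. set (K := cw U U') in *.
  assert (E := cw_decomp U U' Z). fold K in E.
  assert (HZ : K * norm Z <= cw Z U' * norm U + cw U Z * norm U').
  { rewrite <- (Rabs_right K), <- norm_scale, E by lra.
    eapply Rle_trans; [apply norm_triangle|].
    rewrite !norm_scale, !Rabs_right by lra. lra. }
  assert (Hdot : K * dot n Z = cw Z U' * dot n U + cw U Z * dot n U').
  { replace (K * dot n Z) with (dot n (pscale K Z)) by (unfold dot, pscale; simpl; ring).
    rewrite E. unfold dot, padd, pscale; simpl; ring. }
  apply (Rmult_le_reg_l K); [lra|].
  assert (cw Z U' * (s * norm U) <= cw Z U' * dot n U) by (apply Rmult_le_compat_l; lra).
  assert (cw U Z * (s * norm U') <= cw U Z * dot n U') by (apply Rmult_le_compat_l; lra).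
  nra.
Qed.

(* Extends a function on [0, 1] to [R], so that the global [IVT_cor] applies. *)
Definition clamp01 (t : R) : R := Rmax 0 (Rmin 1 t).

Lemma clamp01_in t : 0 <= clamp01 t <= 1.
Proof. unfold clamp01, Rmax, Rmin; repeat destruct Rle_dec; lra. Qed.

Lemma clamp01_id t : 0 <= t <= 1 -> clamp01 t = t.
Proof. intros; unfold clamp01, Rmax, Rmin; repeat destruct Rle_dec; lra. Qed.

Lemma clamp01_contract a b : Rabs (clamp01 a - clamp01 b) <= Rabs (a - b).
Proof.
  unfold clamp01, Rmax, Rmin, Rabs; repeat destruct Rle_dec; repeat destruct Rcase_abs; lra.
Qed.

Definition lipschitz (h : pt -> R) (K : R) : Prop :=
  forall a b, Rabs (h a - h b) <= K * norm (psub a b).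

Lemma lipschitz_dot v : lipschitz (dot v) (norm v).
Proof.
  intros a b. replace (dot v a - dot v b) with (dot v (psub a b))
    by (unfold dot, psub; simpl; ring).
  apply abs_dot_le.
Qed.

Lemma lipschitz_cw_l B o : lipschitz (fun z => cw B (psub z o)) (norm B).
Proof.
  intros a b. replace (cw B (psub a o) - cw B (psub b o)) with (cw B (psub a b))
    by (unfold cw, psub; simpl; ring).
  apply abs_cw_le.
Qed.

Lemma lipschitz_cw_r C o : lipschitz (fun z => cw (psub z o) C) (norm C).
Proof.
  intros a b. replace (cw (psub a o) C - cw (psub b o) C) with (- cw C (psub a b))
    by (unfold cw, psub; simpl; ring).
  rewrite Rabs_Ropp. apply abs_cw_le.
Qed.

Lemma lipschitz_min h1 h2 K1 K2 :
  lipschitz h1 K1 -> lipschitz h2 K2 -> lipschitz (fun z => Rmin (h1 z) (h2 z)) (K1 + K2).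
Proof.
  intros H1 H2 a b. specialize (H1 a b). specialize (H2 a b).
  assert (Rabs (Rmin (h1 a) (h2 a) - Rmin (h1 b) (h2 b))
          <= Rabs (h1 a - h1 b) + Rabs (h2 a - h2 b)).
  { unfold Rmin, Rabs; repeat destruct Rle_dec; repeat destruct Rcase_abs; lra. }
  lra.
Qed.

Lemma continuity_lipschitz_clamp01 f h K :
  cont01 f -> lipschitz h K -> continuity (fun t => h (f (clamp01 t))).
Proof.
  intros Hf Hh x e He. set (K' := Rabs K + 1).
  assert (HK' : 0 < K') by (unfold K'; assert (H := Rabs_pos K); lra).
  destruct (Hf (clamp01 x) (clamp01_in x) (e / K')) as [d [Hd Hfd]];
    [apply Rdiv_lt_0_compat; lra|].
  exists d. split; [exact Hd|]. intros y [_ Hy]. simpl in *. unfold R_dist in *.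
  assert (Hdist := Hfd (clamp01 y) (clamp01_in y)
                     (Rle_lt_trans _ _ _ (clamp01_contract y x) Hy)).
  unfold Defs.dist in Hdist. rewrite norm_psub_sym in Hdist.
  assert (HhK := Hh (f (clamp01 y)) (f (clamp01 x))).
  set (dy := norm (psub (f (clamp01 y)) (f (clamp01 x)))) in *.
  assert (Hn : 0 <= dy) by apply norm_nonneg.
  assert (K * dy <= K' * dy).
  { apply Rmult_le_compat_r; [lra|]. unfold K'. assert (H := Rle_abs K). lra. }
  apply (Rmult_lt_compat_l K') in Hdist; [|lra].
  replace (K' * (e / K')) with e in Hdist by (field; lra).
  lra.
Qed.

Lemma cont01_ivt f h K a b c :
  cont01 f -> lipschitz h K -> 0 <= a -> a <= b -> b <= 1 ->
  h (f a) <= c <= h (f b) \/ h (f b) <= c <= h (f a) ->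
  exists z, a <= z <= b /\ h (f z) = c.
Proof.
  intros Hf Hh Ha Hab Hb Hc.
  assert (Hcont : continuity (fun t => h (f (clamp01 t)) - c)).
  { apply continuity_minus; [exact (continuity_lipschitz_clamp01 f h K Hf Hh)|].
    apply continuity_const. intros ? ?; reflexivity. }
  destruct (IVT_cor _ a b Hcont Hab) as [z [Hz Hfz]].
  - rewrite !clamp01_id by lra. destruct Hc; nra.
  - exists z. rewrite clamp01_id in Hfz by lra. split; [exact Hz|lra].
Qed.

Definition injective01 (f : R -> pt) : Prop :=
  forall a b, 0 <= a <= 1 -> 0 <= b <= 1 -> f a = f b -> a = b.

Definition dot_injective01 (v : pt) (f : R -> pt) : Prop :=
  forall a b, 0 <= a <= 1 -> 0 <= b <= 1 -> dot v (f a) = dot v (f b) -> a = b.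

Lemma dot_injective01_opp v f : dot_injective01 (pscale (-1) v) f -> dot_injective01 v f.
Proof.
  intros H a b Ha Hb E. apply H; auto.
  unfold dot, pscale in *; simpl; lra.
Qed.

Lemma cont01_dot_increasing v f :
  cont01 f -> dot_injective01 v f -> dot v (f 0) < dot v (f 1) ->
  forall a b, 0 <= a -> a < b -> b <= 1 -> dot v (f a) < dot v (f b).
Proof.
  intros Hf Hinj H01 a b Ha Hab Hb.
  destruct (Rlt_dec (dot v (f a)) (dot v (f b))) as [|Hba]; [assumption|exfalso].
  assert (Hne : dot v (f b) <> dot v (f a)) by (intros E; apply Hinj in E; lra).
  destruct (Rle_dec (dot v (f 0)) (dot v (f b))).
  - (* the value at [b] is already taken on [0, a] *)
    destruct (cont01_ivt f (dot v) (norm v) 0 a (dot v (f b)) Hf (lipschitz_dot v))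
      as [z [Hz Ez]]; try lra.
    apply Hinj in Ez; lra.
  - (* the value at [0] is taken again on [b, 1] *)
    destruct (cont01_ivt f (dot v) (norm v) b 1 (dot v (f 0)) Hf (lipschitz_dot v))
      as [z [Hz Ez]]; try lra.
    apply Hinj in Ez; lra.
Qed.

Lemma homeo01_reverse f g : homeo01 f g -> homeo01 (fun a => f (1 - a)) g.
Proof.
  intros [Hin [Hsurj [Hinj [Hc Hcinv]]]]. split; [|split; [|split; [|split]]].
  - intros a Ha. apply Hin; lra.
  - intros x Hx. destruct (Hsurj x Hx) as [a [Ha E]]. exists (1 - a).
    split; [lra|]. replace (1 - (1 - a)) with a by ring. exact E.
  - intros a b Ha Hb E. apply Hinj in E; lra.
  - intros a Ha e He. destruct (Hc (1 - a) ltac:(lra) e He) as [d [Hd Hfd]].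
    exists d. split; [exact Hd|]. intros b Hb Hab. apply Hfd; [lra|].
    replace (1 - b - (1 - a)) with (- (b - a)) by ring. rewrite Rabs_Ropp; exact Hab.
  - intros a Ha e He. destruct (Hcinv (1 - a) ltac:(lra) e He) as [d [Hd Hfd]].
    exists d. split; [exact Hd|]. intros b Hb Hab.
    assert (H := Hfd (1 - b) ltac:(lra) Hab).
    replace (1 - b - (1 - a)) with (- (b - a)) in H by ring. rewrite Rabs_Ropp in H; exact H.
Qed.

Lemma v_monotone_of_dot_injective v f g :
  homeo01 f g -> dot_injective01 v f -> v_monotone v g.
Proof.
  intros Hf Hinj.
  destruct (Rtotal_order (dot v (f 0)) (dot v (f 1))) as [H01|[E01|H10]].
  - exists f. split; [exact Hf|].
    apply cont01_dot_increasing; [apply Hf|exact Hinj|exact H01].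
  - apply Hinj in E01; lra.
  - exists (fun a => f (1 - a)). split; [apply homeo01_reverse, Hf|].
    apply cont01_dot_increasing.
    + apply (homeo01_reverse f g Hf).
    + intros a b Ha Hb E. apply Hinj in E; lra.
    + rewrite Rminus_0_r, Rminus_diag. exact H10.
Qed.

(** * The boundary of a Minkowski sum with the unit disk *)

Section MinkowskiBoundary.

Variables (S : pt -> Prop) (o : pt) (rho : R).
Hypothesis rho_le_half : rho <= 1 / 2.
Hypothesis S_near_o : forall r, S r -> norm (psub r o) <= rho.
Hypothesis S_nonempty : exists r, S r.

Lemma interior_minkD_of_close r x : S r -> norm (psub x r) < 1 -> Defs.interior (minkD S) x.
Proof.
  intros Sr Hx. exists (1 - norm (psub x r)). split; [lra|]. intros q Hq.
  exists r, (psub q r). split; [exact Sr|]. split.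
  - replace (psub q r) with (padd (psub q x) (psub x r))
      by (unfold padd, psub; apply pt_eq; simpl; ring).
    assert (H := norm_triangle (psub q x) (psub x r)).
    unfold Defs.dist in Hq. rewrite norm_psub_sym in Hq. lra.
  - unfold padd, psub; apply pt_eq; simpl; ring.
Qed.

Lemma not_interior_far x : ~ Defs.interior (minkD S) x -> 1 - rho <= norm (psub x o).
Proof.
  intros Hx. destruct S_nonempty as [r Sr].
  destruct (Rle_dec (1 - rho) (norm (psub x o))) as [|Hfar]; [assumption|exfalso].
  apply Hx, (interior_minkD_of_close r); [exact Sr|].
  replace (psub x r) with (padd (psub x o) (psub o r))
    by (unfold padd, psub; apply pt_eq; simpl; ring).
  assert (H := norm_triangle (psub x o) (psub o r)).
  rewrite (norm_psub_sym o r) in H. assert (H' := S_near_o r Sr). lra.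
Qed.

Lemma boundary_far x : boundary (minkD S) x -> 1 / 2 <= norm (psub x o).
Proof. intros [_ Hx]. assert (H := not_interior_far x Hx). lra. Qed.

(* Otherwise the points of [S] close to [y] would lie at distance [< 1] from [x],
   making [x] interior. *)
Lemma boundary_chord_steep x y :
  ~ Defs.interior (minkD S) x -> closure (minkD S) y -> x <> y ->
  dot (psub y x) (psub x o) < rho * norm (psub y x).
Proof.
  intros Hx Hy Hxy. set (w := psub y x).
  destruct (Rlt_dec (dot w (psub x o)) (rho * norm w)) as [|Hsteep]; [assumption|exfalso].
  assert (Hw : 0 < dot w w).
  { destruct (Rlt_dec 0 (dot w w)) as [|Hw]; [assumption|].
    exfalso. apply Hxy. apply Rnot_lt_le in Hw. unfold w, dot, psub in Hw. simpl in Hw.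
    assert (H1 := Rle_0_sqr (fst y - fst x)). assert (H2 := Rle_0_sqr (snd y - snd x)).
    unfold Rsqr in *. apply pt_eq; nra. }
  set (eta := Rmin 1 (dot w w / 4)).
  assert (Heta : 0 < eta /\ eta <= 1 /\ eta <= dot w w / 4).
  { unfold eta; split; [apply Rmin_pos; lra|split; [apply Rmin_l|apply Rmin_r]]. }
  destruct (Hy eta (proj1 Heta)) as [z [[r [d [Sr [Hd Ez]]]] Hyz]].
  assert (HY : norm (psub y r) < 1 + eta).
  { replace (psub y r) with (padd (psub y z) d)
      by (subst z; unfold padd, psub; apply pt_eq; simpl; ring).
    assert (H := norm_triangle (psub y z) d). unfold Defs.dist in Hyz. lra. }
  assert (HYY : dot (psub y r) (psub y r) < (1 + eta) * (1 + eta)).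
  { rewrite <- norm_mul_self. assert (H := norm_nonneg (psub y r)). nra. }
  assert (Hor : - (norm w * rho) <= dot w (psub o r)).
  { assert (H := abs_dot_le w (psub o r)). rewrite norm_psub_sym in H.
    assert (H' := S_near_o r Sr).
    assert (norm w * norm (psub r o) <= norm w * rho)
      by (apply Rmult_le_compat_l; [apply norm_nonneg|exact H']).
    assert (H'' := Rle_abs (- dot w (psub o r))). rewrite Rabs_Ropp in H''. lra. }
  apply Hx, (interior_minkD_of_close r); [exact Sr|].
  apply norm_lt_of_dot; [lra|].
  replace (dot (psub x r) (psub x r))
    with (dot (psub y r) (psub y r) - dot w w - 2 * dot w (psub x o) - 2 * dot w (psub o r))
    by (unfold w, dot, psub; simpl; ring).
  nra.
Qed.

Lemma boundary_ray_unique x y t :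
  boundary (minkD S) x -> boundary (minkD S) y -> 0 < t ->
  psub y o = pscale t (psub x o) -> x = y.
Proof.
  assert (outward : forall x y t, boundary (minkD S) x -> boundary (minkD S) y -> 1 <= t ->
                      psub y o = pscale t (psub x o) -> x = y).
  { clear x y t. intros x y t [_ Hx] [Hy _] Ht E.
    destruct (classic (x = y)) as [|Hxy]; [assumption|exfalso].
    assert (Hc := boundary_chord_steep x y Hx Hy Hxy).
    replace (psub y x) with (pscale (t - 1) (psub x o)) in Hc
      by (unfold psub, pscale in *; injection E; intros; apply pt_eq; simpl; lra).
    rewrite norm_scale, Rabs_right in Hc by lra.
    replace (dot (pscale (t - 1) (psub x o)) (psub x o))
      with ((t - 1) * (norm (psub x o) * norm (psub x o))) in Hc
      by (rewrite norm_mul_self; unfold dot, pscale; simpl; ring).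
    assert (Hfar := not_interior_far x Hx).
    assert (0 <= (t - 1) * norm (psub x o) * (norm (psub x o) - rho))
      by (apply Rmult_le_pos; [apply Rmult_le_pos; [lra|apply norm_nonneg]|lra]).
    nra. }
  intros Hx Hy Ht E. destruct (Rle_dec 1 t).
  - exact (outward x y t Hx Hy r E).
  - symmetry. apply (outward y x (/ t) Hy Hx).
    + rewrite <- Rinv_1. apply Rinv_le_contravar; lra.
    + rewrite E, pscale_pscale, Rinv_l by lra. unfold pscale; apply pt_eq; simpl; ring.
Qed.

Lemma boundary_on_ray b z K a :
  boundary (minkD S) b -> boundary (minkD S) z -> 0 < K -> 0 <= a ->
  pscale K (psub z o) = pscale a (psub b o) -> z = b.
Proof.
  intros Hb Hz HK Ha E. destruct (Req_dec a 0) as [->|Ha0].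
  - exfalso. apply (f_equal norm) in E. rewrite !norm_scale, Rabs_R0, Rabs_right in E by lra.
    assert (H := boundary_far z Hz). nra.
  - symmetry. apply (boundary_ray_unique b z (a / K) Hb Hz); [apply Rdiv_lt_0_compat; lra|].
    assert (E1 := f_equal fst E). assert (E2 := f_equal snd E).
    unfold pscale, psub in *; simpl in *.
    apply pt_eq; simpl; apply (Rmult_eq_reg_l K); try lra;
      [rewrite E1|rewrite E2]; field; lra.
Qed.

Lemma boundary_halfplane_chord x y n :
  boundary (minkD S) x -> boundary (minkD S) y -> norm n = 1 ->
  rho <= dot n (psub x o) -> rho <= dot n (psub y o) -> cw n (psub y x) = 0 -> x = y.
Proof.
  intros Hx Hy Hn Hxn Hyn Hpar.
  assert (forward : forall x y c, boundary (minkD S) x -> boundary (minkD S) y ->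
                      rho <= dot n (psub x o) -> 0 <= c -> psub y x = pscale c n -> x = y).
  { clear x y Hx Hy Hxn Hyn Hpar. intros x y c [_ Hx] [Hy _] Hxn Hc E.
    destruct (classic (x = y)) as [|Hxy]; [assumption|exfalso].
    assert (H := boundary_chord_steep x y Hx Hy Hxy).
    rewrite E, norm_scale, Rabs_right, Hn in H by lra.
    replace (dot (pscale c n) (psub x o)) with (c * dot n (psub x o)) in H
      by (unfold dot, pscale; simpl; ring).
    nra. }
  assert (Hnn : dot n n = 1) by (rewrite <- norm_mul_self, Hn; ring).
  assert (E := parallel_of_cw_zero n (psub y x) Hnn Hpar).
  set (c := dot n (psub y x)) in E.
  destruct (Rle_dec 0 c).
  - exact (forward x y c Hx Hy Hxn r E).
  - symmetry. apply (forward y x (- c) Hy Hx Hyn); [lra|].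
    replace (psub x y) with (pscale (-1) (psub y x))
      by (unfold pscale, psub; apply pt_eq; simpl; ring).
    rewrite E, pscale_pscale. f_equal; ring.
Qed.

Lemma boundary_sector_edge b c z :
  boundary (minkD S) b -> boundary (minkD S) c -> boundary (minkD S) z ->
  0 < cw (psub b o) (psub c o) ->
  0 <= cw (psub b o) (psub z o) -> 0 <= cw (psub z o) (psub c o) ->
  (cw (psub b o) (psub z o) = 0 -> z = b) /\ (cw (psub z o) (psub c o) = 0 -> z = c).
Proof.
  intros Hb Hc Hz HBC HBZ HZC. split; intros E0.
  - apply (boundary_on_ray b z (cw (psub b o) (psub c o)) (cw (psub z o) (psub c o)));
      try assumption.
    rewrite cw_decomp, E0. unfold padd, pscale; apply pt_eq; simpl; ring.
  - apply (boundary_on_ray c z (cw (psub b o) (psub c o)) (cw (psub b o) (psub z o)));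
      try assumption.
    rewrite cw_decomp, E0. unfold padd, pscale; apply pt_eq; simpl; ring.
Qed.

Section BoundaryCurve.

Variable f : R -> pt.
Hypothesis f_cont : cont01 f.
Hypothesis f_inj : injective01 f.
Hypothesis f_bd : forall t, 0 <= t <= 1 -> boundary (minkD S) (f t).

Lemma curve_in_sector b :
  boundary (minkD S) b -> (forall t, 0 <= t <= 1 -> f t <> b) ->
  0 < cw (psub b o) (psub (f 0) o) -> 0 < cw (psub (f 0) o) (psub (f 1) o) ->
  0 < cw (psub b o) (psub (f 1) o) ->
  forall t, 0 <= t <= 1 ->
    0 <= cw (psub b o) (psub (f t) o) /\ 0 <= cw (psub (f t) o) (psub (f 1) o).
Proof.
  intros Hb Hfb H0 H01 H1 t Ht.
  set (m := fun z => Rmin (cw (psub z o) (psub (f 1) o)) (cw (psub b o) (psub z o))).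
  assert (Hm : forall z, 0 <= m z ->
            0 <= cw (psub b o) (psub z o) /\ 0 <= cw (psub z o) (psub (f 1) o)).
  { intros z Hz. unfold m in Hz.
    split; eapply Rle_trans; [exact Hz|apply Rmin_r|exact Hz|apply Rmin_l]. }
  apply Hm. destruct (Rle_dec 0 (m (f t))) as [|Hneg]; [assumption|exfalso].
  assert (Hm0 : 0 < m (f 0)) by (apply Rmin_pos; assumption).
  (* the curve leaves the sector through one of its two bounding rays *)
  destruct (cont01_ivt f m (norm (psub (f 1) o) + norm (psub b o)) 0 t 0 f_cont)
    as [z [Hz Ez]]; try lra.
  { apply lipschitz_min; [apply lipschitz_cw_r|apply lipschitz_cw_l]. }
  destruct (Hm (f z) ltac:(lra)) as [HBz HzC].
  destruct (boundary_sector_edge b (f 1) (f z) Hb (f_bd 1 ltac:(lra)) (f_bd z ltac:(lra))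
              H1 HBz HzC) as [Eb E1].
  revert Ez. unfold m, Rmin. destruct Rle_dec; intros Ez.
  - apply E1, f_inj in Ez; try lra. subst z.
    apply Hneg. replace t with 1 by lra. unfold m. rewrite cw_self.
    apply Rmin_glb; lra.
  - exact (Hfb z ltac:(lra) (Eb Ez)).
Qed.

Lemma curve_in_cone b :
  boundary (minkD S) b -> (forall t, 0 <= t <= 1 -> f t <> b) ->
  0 < cw (psub b o) (psub (f 0) o) -> 0 < cw (psub (f 0) o) (psub (f 1) o) ->
  0 < cw (psub b o) (psub (f 1) o) ->
  forall t, 0 <= t <= 1 ->
    0 <= cw (psub (f 0) o) (psub (f t) o) /\ 0 <= cw (psub (f t) o) (psub (f 1) o).
Proof.
  intros Hb Hfb H0 H01 H1 t Ht.
  assert (Hsec := curve_in_sector b Hb Hfb H0 H01 H1).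
  split; [|apply Hsec, Ht].
  destruct (Rle_dec 0 (cw (psub (f 0) o) (psub (f t) o))) as [|Hneg]; [assumption|exfalso].
  destruct (cont01_ivt f (fun z => cw (psub (f 0) o) (psub z o)) (norm (psub (f 0) o))
              t 1 0 f_cont (lipschitz_cw_l _ _)) as [z [Hz Ez]]; try lra.
  destruct (boundary_sector_edge (f 0) (f 1) (f z) (f_bd 0 ltac:(lra)) (f_bd 1 ltac:(lra))
              (f_bd z ltac:(lra)) H01 ltac:(lra) (proj2 (Hsec z ltac:(lra))))
    as [E0 _].
  apply E0, f_inj in Ez; try lra. subst z.
  apply Hneg. replace t with 0 by lra. rewrite cw_self. lra.
Qed.

Lemma curve_in_halfplane b phi k1 k2 v k th s :
  boundary (minkD S) b -> (forall t, 0 <= t <= 1 -> f t <> b) ->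
  0 < phi < PI / 2 -> 0 < k1 -> 0 < k2 ->
  psub (f 0) o = pscale k1 (rotcw phi (psub b o)) ->
  psub (f 1) o = pscale k2 (rotcw phi (psub (f 0) o)) ->
  0 < k -> norm v = 1 -> v = pscale k (rotcw th (psub (f 1) o)) ->
  0 <= s -> rho <= s * (1 - rho) -> s <= sin th -> s <= sin (th + phi) ->
  forall t, 0 <= t <= 1 -> rho <= dot (perp v) (psub (f t) o).
Proof.
  intros Hb Hfb Hphi Hk1 Hk2 E0 E1 Hk Hv Ev Hs Hrho Hs1 Hs2 t Ht.
  assert (Hpos : forall x, boundary (minkD S) x -> 0 < dot (psub x o) (psub x o)).
  { intros x Hx. rewrite <- norm_mul_self. assert (H := boundary_far x Hx). nra. }
  assert (HB := Hpos b Hb). assert (HU := Hpos (f 0) (f_bd 0 ltac:(lra))).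
  assert (Hsin : 0 < sin phi) by (apply sin_gt_0; lra).
  assert (Hsin2 : 0 < sin (phi + phi)) by (apply sin_gt_0; lra).
  assert (E01 : psub (f 1) o = pscale (k2 * k1) (rotcw (phi + phi) (psub b o)))
    by (rewrite E1, E0, rotcw_scale, rotcw_rotcw, pscale_pscale; reflexivity).
  assert (HBU : 0 < cw (psub b o) (psub (f 0) o))
    by (rewrite E0, cw_scale_rotcw; repeat apply Rmult_lt_0_compat; assumption).
  assert (HUU' : 0 < cw (psub (f 0) o) (psub (f 1) o))
    by (rewrite E1, cw_scale_rotcw; repeat apply Rmult_lt_0_compat; assumption).
  assert (HBU' : 0 < cw (psub b o) (psub (f 1) o))
    by (rewrite E01, cw_scale_rotcw; repeat apply Rmult_lt_0_compat; assumption).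
  destruct (curve_in_cone b Hb Hfb HBU HUU' HBU' t Ht) as [HUZ HZU'].
  assert (Ev0 : v = pscale (k * k2) (rotcw (th + phi) (psub (f 0) o)))
    by (rewrite Ev, E1, rotcw_scale, rotcw_rotcw, pscale_pscale; reflexivity).
  assert (HnU' : s * norm (psub (f 1) o) <= dot (perp v) (psub (f 1) o)).
  { rewrite Ev, dot_perp_rotcw by (try rewrite <- Ev; assumption).
    rewrite Rmult_comm. apply Rmult_le_compat_l; [apply norm_nonneg|exact Hs1]. }
  assert (HnU : s * norm (psub (f 0) o) <= dot (perp v) (psub (f 0) o)).
  { rewrite Ev0, dot_perp_rotcw by (try rewrite <- Ev0; try apply Rmult_lt_0_compat; assumption).
    rewrite Rmult_comm. apply Rmult_le_compat_l; [apply norm_nonneg|exact Hs2]. }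
  assert (Hproj := sector_projection_lower_bound _ _ _ (perp v) s HUU' HUZ HZU' Hs HnU HnU').
  assert (Hfar := not_interior_far (f t) (proj2 (f_bd t Ht))).
  assert (s * (1 - rho) <= s * norm (psub (f t) o)) by (apply Rmult_le_compat_l; assumption).
  lra.
Qed.

Lemma curve_dot_injective_of_halfplane v :
  norm v = 1 -> (forall t, 0 <= t <= 1 -> rho <= dot (perp v) (psub (f t) o)) ->
  dot_injective01 v f.
Proof.
  intros Hv Hhalf a b Ha Hb E. apply f_inj; try assumption.
  apply (boundary_halfplane_chord (f a) (f b) (perp v)); auto.
  - rewrite norm_perp; exact Hv.
  - rewrite cw_perp_l. unfold dot, psub in *; simpl; lra.
Qed.

End BoundaryCurve.

End MinkowskiBoundary.

Lemma square_norm o eps r : 0 <= eps -> square o eps r -> norm (psub r o) <= eps.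
Proof.
  intros He [H1 H2]. apply norm_le_of_dot; [exact He|].
  unfold dot, psub; simpl.
  assert (Hx := Rsqr_le_abs_1 _ (eps / 2) (Rle_trans _ _ _ H1 (Rle_abs _))).
  assert (Hy := Rsqr_le_abs_1 _ (eps / 2) (Rle_trans _ _ _ H2 (Rle_abs _))).
  unfold Rsqr in *. nra.
Qed.

Lemma division_angle_bounds Lam :
  (10 <= Lam)%nat -> 0 < 2 * PI / INR Lam < PI / 2 /\ 2 * PI / INR Lam <= 7 * (1 / INR Lam).
Proof.
  intros HLam. assert (HL : 10 <= INR Lam) by (apply (le_INR 10) in HLam; simpl in HLam; lra).
  assert (HPI := PI_lt_7_2). assert (HPI0 := PI_RGT_0).
  unfold Rdiv. rewrite Rmult_1_l.
  assert (0 < / INR Lam <= / 10) by (split; [apply Rinv_0_lt_compat|apply Rinv_le_contravar]; lra).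
  split; [split|]; nra.
Qed.

Lemma previous_division_point o Lam (p : nat -> pt) i phi :
  (10 <= Lam)%nat -> p 0%nat = p Lam ->
  (forall k, (1 <= k <= Lam)%nat -> is_cw_ang (psub (p (k - 1)%nat) o) (psub (p k) o) phi) ->
  (1 <= i <= Lam)%nat ->
  exists j, (1 <= j <= Lam)%nat /\ ~ (j = i \/ j = (i - 1)%nat \/ (i = 1%nat /\ j = Lam)) /\
    is_cw_ang (psub (p j) o) (psub (p (i - 1)%nat) o) phi.
Proof.
  intros HLam Hp0 Hp Hi.
  destruct (Nat.eq_dec i 1) as [->|Hi1]; [|destruct (Nat.eq_dec i 2) as [->|Hi2]].
  - exists (Lam - 1)%nat. split; [lia|split; [lia|]].
    simpl. rewrite Hp0. apply Hp. lia.
  - exists Lam. split; [lia|split; [lia|]].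
    simpl. rewrite <- Hp0. apply (Hp 1%nat). lia.
  - exists (i - 2)%nat. split; [lia|split; [lia|]].
    replace (i - 2)%nat with (i - 1 - 1)%nat by lia. apply Hp. lia.
Qed.

Theorem mainTheorem11 :
  forall (eps : R), 0 < eps <= 1 / 10 ->
  forall (o : pt) (S : pt -> Prop),
    (forall x, S x -> square o eps x) ->
    (exists x, S x) ->
    circular_domain S ->
  forall (Lam : nat), (10 <= Lam)%nat ->
  forall (p : nat -> pt),
    p 0%nat = p Lam ->
    (forall k, (1 <= k <= Lam)%nat ->
       boundary (minkD S) (p k) /\ p k <> o /\
       is_cw_ang (psub (p (k - 1)%nat) o) (psub (p k) o) (2 * PI / INR Lam)) ->
  forall (i : nat), (1 <= i <= Lam)%nat ->
  forall (g : pt -> Prop), is_portion (boundary (minkD S)) p Lam i g ->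
  forall (v : pt), norm v = 1 ->
  forall (th : R), is_cw_ang (psub (p i) o) v th ->
    (7 * (1 / INR Lam + eps) <= th <= PI - 7 * (1 / INR Lam + eps) \/
     PI + 7 * (1 / INR Lam + eps) <= th <= 2 * PI - 7 * (1 / INR Lam + eps)) ->
    v_monotone v g.
Proof.
  intros eps Heps o S Hsq Hne _ Lam HLam p Hp0 Hp i Hi g
    [Hg [[f [Hf [Ef0 Ef1]]] Hgp]] v Hv th [_ [k [Hk Ev]]] Hth.
  set (phi := 2 * PI / INR Lam) in *.
  destruct (division_angle_bounds Lam HLam) as [Hphi Hphi7]; fold phi in Hphi, Hphi7.
  destruct (previous_division_point o Lam p i phi HLam Hp0
              (fun k Hk => proj2 (proj2 (Hp k Hk))) Hi) as [j [Hj [Hji [_ [k1 [Hk1 E0]]]]]].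
  destruct (Hp i Hi) as [_ [_ [_ [k2 [Hk2 E1]]]]].
  assert (Hpj : boundary (minkD S) (p j)) by apply (Hp j Hj).
  rewrite <- Ef0 in E0. rewrite <- Ef0, <- Ef1 in E1. rewrite <- Ef1 in Ev.
  assert (Hnear : forall r, S r -> norm (psub r o) <= eps)
    by (intros r Hr; apply square_norm; [lra|auto]).
  pose proof Hf as (Hfg & _ & Hinj & Hcont & _).
  assert (Hbd : forall t, 0 <= t <= 1 -> boundary (minkD S) (f t))
    by (intros t Ht; apply Hg, Hfg, Ht).
  assert (Havoid : forall t, 0 <= t <= 1 -> f t <> p j)
    by (intros t Ht E; apply Hji, (Hgp j Hj); rewrite <- E; apply Hfg, Ht).
  destruct (sin_7x_lower_bound eps Heps) as [Hs0 Hs].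
  apply (v_monotone_of_dot_injective v f g Hf).
  destruct Hth as [Hth|Hth].
  - destruct (sin_window (7 * eps) phi th) as [Hs1 Hs2]; try lra.
    eapply curve_dot_injective_of_halfplane; try eassumption.
    eapply curve_in_halfplane with (b := p j) (k1 := k1) (k2 := k2) (k := k) (th := th)
      (s := sin (7 * eps)); try eassumption; lra.
  - (* [- v] makes the angle [th - PI] with [op_i] *)
    destruct (sin_window (7 * eps) phi (th - PI)) as [Hs1 Hs2]; try lra.
    apply dot_injective01_opp.
    eapply curve_dot_injective_of_halfplane; try eassumption.
    + rewrite norm_opp; exact Hv.
    + eapply curve_in_halfplane with (b := p j) (k1 := k1) (k2 := k2) (k := k) (th := th - PI)
        (s := sin (7 * eps)); try eassumption; try lra.
      * rewrite norm_opp; exact Hv.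
      * rewrite rotcw_sub_PI, pscale_pscale, Ev, pscale_pscale. f_equal; ring.
Qed.
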